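(* Let $n\ge1$ and let $P=\{(i,j)\colon 1\le i\le j\le n\}$ be the shifted staircase. Then $\sum_{p\in P}\mathbb{1}_p\equiv \frac{n(n+1)}{4}$.
   Context: $P$ is ordered by $(i,j)\le(i',j')$ iff $i\le i'$ and $j\le j'$. $\mathcal{J}(P)$ is the set of order ideals of $P$. For $x\in P$, $I\in\mathcal{J}(P)$: $\mathbb{1}_x(I)=1$ if $x\in I$, else $0$; $T_x^+(I)=1$ if $x$ is a minimal element of $P\setminus I$, else $0$; $T_x^-(I)=1$ if $x$ is a maximal element of $I$, else $0$; $T_x=T_x^+-T_x^-$. For $f,g\colon\mathcal{J}(P)\to\mathbb{R}$, $f\equiv g$ means $f-g=\sum_{x\in P}c_xT_x$ for some real constants $c_x$; a real number denotes the corresponding constant function. *)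

From HB Require Import structures.
From mathcomp Require Import all_boot all_order all_algebra.
From mathcomp Require Import Rstruct.
Set Implicit Arguments. Unset Strict Implicit. Unset Printing Implicit Defensive.
Import Order.TTheory GRing.Theory Num.Theory.

(* Ambient type of index pairs; the element (i,j) of the paper (1-indexed)
   is represented by (i-1, j-1) : 'I_n * 'I_n. *)
Definition pt (n : nat) := ('I_n * 'I_n)%type.

Definition leP (n : nat) (x y : pt n) : bool :=
  ((x.1 <= y.1)%N && (x.2 <= y.2)%N).

Definition stair (n : nat) : {set pt n} := [set x : pt n | (x.1 <= x.2)%N].

Definition is_ideal (n : nat) (I : {set pt n}) : bool :=
  (I \subset stair n) &&
  [forall x : pt n, forall y : pt n,
     [&& x \in stair n, y \in I & leP x y] ==> (x \in I)].

Definition min_compl (n : nat) (I : {set pt n}) (x : pt n) : bool :=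
  (x \in stair n :\: I) &&
  [forall y : pt n, ((y \in stair n :\: I) && leP y x) ==> (y == x)].

Definition max_in (n : nat) (I : {set pt n}) (x : pt n) : bool :=
  (x \in I) && [forall y : pt n, ((y \in I) && leP x y) ==> (y == x)].

Local Open Scope ring_scope.

Definition ind (n : nat) (x : pt n) (I : {set pt n}) : Rdefinitions.R :=
  if x \in I then 1 else 0.
Definition Tplus (n : nat) (x : pt n) (I : {set pt n}) : Rdefinitions.R :=
  if min_compl I x then 1 else 0.
Definition Tminus (n : nat) (x : pt n) (I : {set pt n}) : Rdefinitions.R :=
  if max_in I x then 1 else 0.
Definition toggleT (n : nat) (x : pt n) (I : {set pt n}) : Rdefinitions.R :=
  Tplus x I - Tminus x I.

Definition toggle_equiv (n : nat) (f g : {set pt n} -> Rdefinitions.R) : Prop :=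
  exists c : pt n -> Rdefinitions.R, forall I : {set pt n}, is_ideal I ->
    f I - g I = \sum_(x in stair n) c x * toggleT x I.

(* Fix an order ideal and let m_d be the number of its cells on the diagonal j - i = d.
   On a unit square of the staircase, T^+ at the top corner minus T^- at the bottom
   corner is the mixed second difference of the indicators of the four corners, because
   these indicators are monotone; boundary squares are degenerate cases. Pairing every T^+
   with the T^- one step down its diagonal, the toggles on diagonal d >= 1 add up to
   m_(d-1) - 2 m_d + m_(d+1), and those on the main diagonal to 1 + 2 (m_1 - m_0). The
   weights c_d = (d(d+1) - n(n+1))/2 have second difference 1 and vanish just past the
   last diagonal, so two summations by parts turn sum_d c_d (toggles on diagonal d)
   into sum_d m_d - n(n+1)/4. *)

From Pilot Require Import Defs.
From mathcomp Require Import all_boot all_order all_algebra.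
From mathcomp Require Import Rstruct.
From mathcomp Require Import zify ring lra.
Import Order.TTheory GRing.Theory Num.Theory.
Set Implicit Arguments. Unset Strict Implicit. Unset Printing Implicit Defensive.
Local Open Scope ring_scope.

Lemma sum_nat_subn (V : nmodType) n a (G : nat -> V) :
  \sum_(0 <= i < n - a) G i = \sum_(0 <= i < n | (i + a < n)%N) G i.
Proof.
rewrite (big_nat_widen _ _ _ _ _ (leq_subr a n)); apply: eq_bigl => i.
by rewrite ltn_subRL addnC.
Qed.

Lemma sum_stair_diagonals (V : nmodType) n (F : nat -> nat -> V) :
  \sum_(x in stair n) F x.1 x.2 = \sum_(0 <= d < n) \sum_(0 <= i < n - d) F i (i + d)%N.
Proof.
transitivity (\sum_(i < n) \sum_(j < n | (i <= j)%N) F i j).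
  by rewrite pair_big_dep; apply: eq_bigl => x; rewrite inE.
transitivity (\sum_(0 <= i < n) \sum_(0 <= d < n | (d + i < n)%N) F i (i + d)%N).
  rewrite big_mkord; apply: eq_bigr => i _.
  rewrite -(big_mkord (fun j => i <= j)%N (F i)).
  transitivity (\sum_(i <= j < n) F i j); first by rewrite [RHS](big_nat_widenl _ 0).
  by rewrite -{1}(add0n i) big_addn sum_nat_subn; apply: eq_bigr => d _; rewrite addnC.
rewrite (exchange_big_dep_nat xpredT) //; apply: eq_bigr => d _.
by rewrite sum_nat_subn; apply: eq_bigl => i; rewrite addnC.
Qed.

Lemma sumr_diff_shift (V : zmodType) (f g : nat -> V) s :
  \sum_(0 <= i < s.+1) (f i - g i) = f 0 - g s + \sum_(0 <= i < s) (f i.+1 - g i).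
Proof.
by rewrite !sumrB big_nat_recl // big_nat_recr //= opprD [- _ - _]addrC addrACA.
Qed.

Lemma sum_weighted_second_diff (R : comPzRingType) (e m : nat -> R) j :
  (forall d, e d.+1 = e d + d.+1%:R) ->
  \sum_(0 <= d < j) e d.+1 * (m d - m d.+1 *+ 2 + m d.+2) =
  e j * (m j.+1 - m j) - e 0 * (m 1 - m 0) - j%:R * m j + \sum_(0 <= d < j) m d.
Proof.
move=> eS; elim: j => [|j IH]; first by rewrite !big_geq // mul0r; ring.
by rewrite !big_nat_recr //= IH eS; ring.
Qed.

Definition diag_weight {R : numFieldType} (k d : nat) : R :=
  ((d * d.+1)%:R - (k.+1 * k.+2)%:R) / 2.

(* Halved on the main diagonal, which is its own mirror image: its toggle sum
   [1 + 2 (m 1 - m 0)] is the second difference of the diagonal counts extended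
   symmetrically by [m (-1) = m 1]. *)
Definition toggle_coef {R : numFieldType} (k d : nat) : R :=
  if d is 0 then diag_weight k 0 / 2 else diag_weight k d.

Lemma diag_weightS (R : numFieldType) k d : diag_weight k d.+1 = diag_weight k d + d.+1%:R :> R.
Proof. by rewrite /diag_weight; field. Qed.

Lemma weighted_diag_sum (R : numFieldType) k (m D : nat -> R) :
  m k.+1 = 0 -> D 0 = 1 + (m 1 - m 0) *+ 2 ->
  (forall d, (d < k)%N -> D d.+1 = m d - m d.+1 *+ 2 + m d.+2) ->
  \sum_(0 <= d < k.+1) toggle_coef k d * D d
    = \sum_(0 <= d < k.+1) m d - (k.+1 * k.+2)%:R / 4.
Proof.
move=> m_end D0 DS; rewrite big_nat_recl // D0.
rewrite (eq_big_nat _ _ (F2 := fun d => diag_weight k d.+1 * (m d - m d.+1 *+ 2 + m d.+2)));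
  last by move=> d /andP[_ ltdk]; rewrite DS.
rewrite sum_weighted_second_diff; last exact: diag_weightS.
have weight_end : diag_weight k k = - k.+1%:R :> R.
  by rewrite /diag_weight; field.
rewrite m_end weight_end big_nat_recr //= /toggle_coef /diag_weight.
by field.
Qed.

(* [a], [b], [c], [d] are the memberships of the corners (i,j), (i,j+1), (i+1,j),
   (i+1,j+1) of a unit square; the left-hand side is T^+ at (i+1,j+1) minus T^- at (i,j). *)
Lemma toggle_square (R : pzRingType) (a b c d : bool) :
  d ==> b -> d ==> c -> b ==> a -> c ==> a ->
  (if [&& ~~ d, b & c] then 1 else 0) - (if [&& a, ~~ b & ~~ c] then 1 else 0)
    = b%:R + c%:R - d%:R - a%:R :> R.
Proof.
by case: a b c d => [] [] [] [] //= _ _ _ _; rewrite ?(addr0, add0r, subr0, sub0r, subrr, addrK, oppr0).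
Qed.

Lemma stair_inord k i j : (i < k.+1)%N -> (j < k.+1)%N ->
  (((inord i, inord j) : pt k.+1) \in stair k.+1) = (i <= j)%N.
Proof. by move=> ltik ltjk; rewrite inE /= !inordK. Qed.

Lemma leP_inord k i j i' j' : (i < k.+1)%N -> (j < k.+1)%N -> (i' < k.+1)%N -> (j' < k.+1)%N ->
  Defs.leP ((inord i, inord j) : pt k.+1) (inord i', inord j') = (i <= i')%N && (j <= j')%N.
Proof. by move=> *; rewrite /Defs.leP /= !inordK. Qed.

Lemma pt_eq_inord k i j (y : pt k.+1) : (i < k.+1)%N -> (j < k.+1)%N ->
  (y == (inord i, inord j)) = ((y.1 == i :> nat) && (y.2 == j :> nat)).
Proof. by case: y => a b ltiN ltjN; rewrite xpair_eqE -!val_eqE /= !inordK. Qed.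

Section IdealCells.
Local Notation R := Rdefinitions.R.
Variable k : nat.
Local Notation N := k.+1.
Variable I : {set pt N}.
Hypothesis idealI : is_ideal I.

Definition cell (i j : nat) : bool :=
  [&& (i < N)%N, (j < N)%N & ((inord i, inord j) : pt N) \in I].

Lemma cell_inord i j : (i < N)%N -> (j < N)%N -> (((inord i, inord j) : pt N) \in I) = cell i j.
Proof. by move=> ltiN ltjN; rewrite /cell ltiN ltjN. Qed.

Lemma cellE (x : pt N) : cell x.1 x.2 = (x \in I).
Proof. by case: x => a b; rewrite /cell /= !ltn_ord !inord_val. Qed.

Lemma cell_le i j : cell i j -> (i <= j)%N.
Proof.
case/and3P=> ltiN ltjN; case/andP: idealI => /subsetP sub_stair _ /sub_stair.
by rewrite stair_inord.
Qed.

Lemma cell_down i j i' j' :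
  cell i j -> (i' <= i)%N -> (j' <= j)%N -> (i' <= j')%N -> cell i' j'.
Proof.
move=> cij le_i'i le_j'j le_i'j'; have le_ij := cell_le cij.
case/and3P: cij => ltiN ltjN xI.
rewrite -cell_inord; try lia.
case/andP: idealI => _ /forallP/(_ (inord i', inord j')) /forallP/(_ (inord i, inord j)).
by move/implyP; apply; rewrite stair_inord ?leP_inord ?xI; lia.
Qed.

Lemma max_inE i j : (i <= j < N)%N ->
  max_in I (inord i, inord j) = [&& cell i j, ~~ cell i j.+1 & ~~ cell i.+1 j].
Proof.
case/andP=> le_ij ltjN; have ltiN : (i < N)%N by lia.
rewrite /max_in cell_inord //; case cij: (cell i j) => //=.
apply/forallP/andP => [maxij | [/negP no_ijS /negP no_iSj] [a b]].
  split; apply/negP => /and3P[ltaN ltbN yI].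
    have := maxij (inord i, inord j.+1).
    by rewrite yI leP_inord ?pt_eq_inord //= ?inordK; lia.
  have := maxij (inord i.+1, inord j).
  by rewrite yI leP_inord ?pt_eq_inord //= ?inordK; lia.
rewrite -(cellE (a, b)) /= pt_eq_inord // /Defs.leP /= !inordK //.
apply/implyP => /and3P[cab le_ia le_jb].
have le_ab := cell_le cab.
case: (ltnP j b) => [lt_jb | le_bj].
  by case: no_ijS; apply: cell_down cab _ _ _; lia.
case: (ltnP i a) => [lt_ia | le_ai].
  by case: no_iSj; apply: cell_down cab _ _ _; lia.
lia.
Qed.

Lemma min_complE i j : (i <= j < N)%N ->
  min_compl I (inord i, inord j) =
  [&& ~~ cell i j, (i == 0) || cell i.-1 j & (i == j) || cell i j.-1].
Proof.
case/andP=> le_ij ltjN; have ltiN : (i < N)%N by lia.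
rewrite /min_compl !inE /= !inordK // le_ij cell_inord // andbT.
case cij: (cell i j) => //=.
apply/forallP/andP => [minij | [in_iPj in_ijP] [a b]].
  split.
    case: eqP => //= nz_i; apply/negPn/negP => nc; have := minij (inord i.-1, inord j).
    by rewrite inE cell_inord ?(negbTE nc) ?stair_inord ?leP_inord ?pt_eq_inord //= ?inordK; lia.
  case: eqP => //= ne_ij; apply/negPn/negP => nc; have := minij (inord i, inord j.-1).
  by rewrite inE cell_inord ?(negbTE nc) ?stair_inord ?leP_inord ?pt_eq_inord //= ?inordK; lia.
rewrite !inE /= -(cellE (a, b)) /= pt_eq_inord // /Defs.leP /= !inordK //.
apply/implyP => /andP[/andP[nab le_ab] /andP[le_ai le_bj]].
case: (ltnP a i) => [lt_ai | le_ia].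
  by case/negP: nab; move: in_iPj; case: eqP => [? | _ /= /cell_down]; [lia | apply; lia].
case: (ltnP b j) => [lt_bj | le_jb].
  by case/negP: nab; move: in_ijP; case: eqP => [? | _ /= /cell_down]; [lia | apply; lia].
lia.
Qed.

Definition cellR i j : R := (cell i j)%:R.
Definition Tp i j : R := Tplus ((inord i, inord j) : pt N) I.
Definition Tm i j : R := Tminus ((inord i, inord j) : pt N) I.

Lemma toggle_pair_interior i j : (i < j)%N -> (j.+1 < N)%N ->
  Tp i.+1 j.+1 - Tm i j = cellR i j.+1 + cellR i.+1 j - cellR i.+1 j.+1 - cellR i j.
Proof.
move=> lt_ij ltjN.
rewrite /Tp /Tm /Tplus /Tminus min_complE ?max_inE /= ?eqSS ?(ltn_eqF lt_ij); try lia.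
by apply: toggle_square; apply/implyP => /cell_down; apply; lia.
Qed.

(* The cell (i+1,i) lies outside the staircase; (i,i+1) plays its role in the square. *)
Lemma toggle_pair_diag i : (i.+1 < N)%N ->
  Tp i.+1 i.+1 - Tm i i = cellR i i.+1 *+ 2 - cellR i.+1 i.+1 - cellR i i.
Proof.
move=> ltiN.
have no_below : cell i.+1 i = false by apply/negP => /cell_le; lia.
rewrite /Tp /Tm /Tplus /Tminus min_complE ?max_inE /= ?eqxx ?no_below ?andbT; try lia.
have := @toggle_square R (cell i i) (cell i i.+1) (cell i i.+1) (cell i.+1 i.+1).
rewrite !andbb -mulr2n => -> //; apply/implyP => /cell_down; apply; lia.
Qed.

Lemma Tp_origin : Tp 0 0 = 1 - cellR 0 0.
Proof. by rewrite /Tp /Tplus min_complE /cellR //=; case: (cell 0 0); rewrite ?subrr ?subr0. Qed.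

Lemma Tp_first_row j : (j.+1 < N)%N -> Tp 0 j.+1 = cellR 0 j - cellR 0 j.+1.
Proof.
move=> ltjN; have : cell 0 j.+1 ==> cell 0 j by apply/implyP => /cell_down; apply; lia.
rewrite /Tp /Tplus min_complE /cellR /=; last lia.
by case: (cell 0 j.+1); case: (cell 0 j); rewrite //= ?subrr ?subr0.
Qed.

Lemma Tm_last_column i : (i < k)%N -> Tm i k = cellR i k - cellR i.+1 k.
Proof.
move=> ltik; have : cell i.+1 k ==> cell i k by apply/implyP => /cell_down; apply; lia.
have no_beyond : cell i k.+1 = false by rewrite /cell ltnn andbF.
rewrite /Tm /Tminus max_inE /cellR ?no_beyond /=; last lia.
by case: (cell i.+1 k); case: (cell i k); rewrite //= ?subrr ?subr0.
Qed.

Lemma Tm_corner : Tm k k = cellR k k.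
Proof.
have no_beyond : cell k k.+1 = false by rewrite /cell ltnn andbF.
have no_below : cell k.+1 k = false by rewrite /cell ltnn.
by rewrite /Tm /Tminus max_inE ?no_beyond ?no_below ?andbT ?leqnn // /cellR; case: cell.
Qed.

Definition diag_count d : R := \sum_(0 <= i < N - d) cellR i (i + d)%N.
Definition diag_toggle d : R := \sum_(0 <= i < N - d) (Tp i (i + d)%N - Tm i (i + d)%N).

Lemma diag_toggle0 : diag_toggle 0 = 1 + (diag_count 1 - diag_count 0) *+ 2.
Proof.
rewrite /diag_toggle subn0 sumr_diff_shift Tp_origin addn0 Tm_corner.
rewrite (eq_big_nat _ _ (F2 := fun i => cellR i i.+1 *+ 2 - cellR i.+1 i.+1 - cellR i i));
  last by move=> i /andP[_ ltik]; rewrite !addn0 toggle_pair_diag.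
have count1 : diag_count 1 = \sum_(0 <= i < k) cellR i i.+1.
  by rewrite /diag_count subSS subn0; apply: eq_bigr => i _; rewrite addn1.
have count0_l : diag_count 0 = cellR 0 0 + \sum_(0 <= i < k) cellR i.+1 i.+1.
  by rewrite /diag_count subn0 big_nat_recl //; under eq_bigr do rewrite addn0.
have count0_r : diag_count 0 = \sum_(0 <= i < k) cellR i i + cellR k k.
  by rewrite /diag_count subn0 big_nat_recr //= addn0; under eq_bigr do rewrite addn0.
rewrite sumrB sumrB sumrMnl; lra.
Qed.

Lemma diag_toggleS d : (d < k)%N ->
  diag_toggle d.+1 = diag_count d - diag_count d.+1 *+ 2 + diag_count d.+2.
Proof.
move=> ltdk; set s := (k - d.+1)%N.
have N_sub_Sd : (N - d.+1 = s.+1)%N by rewrite /s; lia.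
have s_add_Sd : (s + d.+1 = k)%N by rewrite /s; lia.
rewrite /diag_toggle N_sub_Sd sumr_diff_shift add0n s_add_Sd Tp_first_row ?Tm_last_column; try lia.
rewrite (eq_big_nat _ _ (F2 := fun i => cellR i (i + d.+2)%N + cellR i.+1 (i.+1 + d)%N
                                     - cellR i.+1 (i.+1 + d.+1)%N - cellR i (i + d.+1)%N)); last first.
  by move=> i /andP[_ ltis]; rewrite addSn toggle_pair_interior ?addnS ?addSn //; lia.
have count_SSd : diag_count d.+2 = \sum_(0 <= i < s) cellR i (i + d.+2)%N by rewrite /diag_count subSS.
have count_Sd_l : diag_count d.+1 = cellR 0 d.+1 + \sum_(0 <= i < s) cellR i.+1 (i.+1 + d.+1)%N.
  by rewrite /diag_count N_sub_Sd big_nat_recl.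
have count_Sd_r : diag_count d.+1 = \sum_(0 <= i < s) cellR i (i + d.+1)%N + cellR s k.
  by rewrite /diag_count N_sub_Sd big_nat_recr //= s_add_Sd.
have count_d : diag_count d = cellR 0 d + \sum_(0 <= i < s) cellR i.+1 (i.+1 + d)%N + cellR s.+1 k.
  have N_sub_d : (N - d = s.+2)%N by rewrite /s; lia.
  have Ss_add_d : (s.+1 + d = k)%N by rewrite /s; lia.
  by rewrite /diag_count N_sub_d big_nat_recl // big_nat_recr //= Ss_add_d add0n addrA.
rewrite sumrB sumrB big_split /=; lra.
Qed.

Lemma sum_stair_ind : \sum_(p in stair N) ind p I = \sum_(0 <= d < N) diag_count d.
Proof.
transitivity (\sum_(p in stair N) cellR p.1 p.2); last exact: sum_stair_diagonals.
by apply: eq_bigr => p _; rewrite /cellR cellE /ind; case: (p \in I).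
Qed.

Lemma sum_stair_toggle (c : nat -> R) :
  \sum_(x in stair N) c (x.2 - x.1)%N * toggleT x I = \sum_(0 <= d < N) c d * diag_toggle d.
Proof.
pose F i j := c (j - i)%N * (Tp i j - Tm i j).
transitivity (\sum_(x in stair N) F x.1 x.2).
  by apply: eq_bigr => -[a b] _; rewrite /F /Tp /Tm /= !inord_val.
rewrite sum_stair_diagonals; apply: eq_bigr => d _.
by rewrite /diag_toggle mulr_sumr; apply: eq_bigr => i _; rewrite /F addKn.
Qed.
End IdealCells.

Theorem corollary3p18 (n : nat) (hn : (1 <= n)%N) :
  toggle_equiv (fun I : {set pt n} => \sum_(p in stair n) ind p I)
               (fun _ => ((n * (n + 1))%:R / 4%:R : Rdefinitions.R)).
Proof.
case: n hn => [//|k] _.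
exists (fun x : pt k.+1 => toggle_coef k (x.2 - x.1)) => I idealI.
rewrite sum_stair_toggle sum_stair_ind addn1 (weighted_diag_sum (m := diag_count I)) //.
- by rewrite /diag_count subnn big_geq.
- exact: diag_toggle0.
- exact: diag_toggleS.
Qed.
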